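(* Let $q>r\geq 1$ and $N\geq 1$ be integers. Then: (1) $f_{q,r}(N)\geq f_{q-t,r-t}(N)$ and $g_{q,r}(N)\geq g_{q-t,r-t}(N)$ for all integers $0\leq t<r$; (2) $f_{q,r}(N)\geq f_{q/d,r/d}(N)$ and $g_{q,r}(N)\geq g_{q/d,r/d}(N)$ for every positive integer $d$ dividing $\gcd(q,r)$; (3) if $p=\lfloor \frac{q}{q-r}\rfloor\geq 2$, then $f_{q,r}(N)\geq f_{p,p-1}(N)$ and $g_{q,r}(N)\geq g_{p,p-1}(N)$.
   Context: Colors are from $[q]$; path length means number of vertices. For a $q$-edge-colored complete graph $K$ on $[N]$ with its natural order, $f_{q,r}(K)$ is the maximum length of a monotone path (vertices strictly increasing) in $K$ using at most $r$ colors, and $f_{q,r}(N)$ is the minimum of $f_{q,r}(K)$ over all such $K$ on $N$ vertices. For a $q$-edge-colored tournament $T$ (orientation of a complete graph), $g_{q,r}(T)$ is the maximum length of a directed path in $T$ whose edges receive at most $r$ colors, and $g_{q,r}(N)$ is the minimum of $g_{q,r}(T)$ over all $q$-edge-colored $N$-vertex tournaments $T$. *)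

From mathcomp Require Import all_boot.
Set Implicit Arguments. Unset Strict Implicit. Unset Printing Implicit Defensive.

(* A q-edge-colouring is a function on
   ordered pairs of vertices with values in 'I_q (colours [q]); for the
   complete graph only the values on pairs (i,j) with i < j are used, for a
   tournament only the values on arcs (i,j) with T (i,j) are used. *)

Definition coloring (N q : nat) := {ffun 'I_N * 'I_N -> 'I_q}.

Definition path_colors (N q : nat) (c : coloring N q) (s : seq 'I_N) : {set 'I_q} :=
  [set c p | p in zip s (behead s)].

Definition good_monotone (N q r : nat) (c : coloring N q) (s : seq 'I_N) : bool :=
  sorted (fun x y : 'I_N => x < y) s && (#|path_colors c s| <= r).

Definition fK (N q r : nat) (c : coloring N q) : nat :=
  \max_(n < N.+1 | [exists s : n.-tuple 'I_N, good_monotone r c s]) n.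

Definition f (q r N : nat) : nat :=
  \big[minn/N]_(c : coloring N q) fK r c.

(* tournaments on 'I_N: T (i,j) means arc i -> j *)
Definition is_tournament (N : nat) (T : {ffun 'I_N * 'I_N -> bool}) : bool :=
  [forall i, [forall j, if i == j then ~~ T (i, j)
                        else (T (i, j) != T (j, i))]].

Definition good_directed (N q r : nat) (T : {ffun 'I_N * 'I_N -> bool})
    (c : coloring N q) (s : seq 'I_N) : bool :=
  [&& uniq s, all (fun p => T p) (zip s (behead s)) & (#|path_colors c s| <= r)].

Definition gT (N q r : nat) (T : {ffun 'I_N * 'I_N -> bool}) (c : coloring N q) : nat :=
  \max_(n < N.+1 | [exists s : n.-tuple 'I_N, good_directed r T c s]) n.

Definition g (q r N : nat) : nat :=
  \big[minn/N]_(T : {ffun 'I_N * 'I_N -> bool} | is_tournament T)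
     \big[minn/N]_(c : coloring N q) gT r T c.

From mathcomp Require Import all_boot zify.

Set Implicit Arguments.
Unset Strict Implicit.
Unset Printing Implicit Defensive.

(* If phi : [q] -> [q'] pulls every set of at most r' colours back to at most
   r colours, then recolouring by phi maps each q-colouring to a q'-colouring
   in which every path with at most r' colours had at most r colours before;
   hence f_{q',r'}(N) <= f_{q,r}(N), and likewise for g.  All three parts use
   the block map i |-> min (floor ((i - s) / k), q' - 1), whose fibres all have
   at least k elements once s + q' k <= q.  Counting the complement, a set S
   of colours then pulls back to at most q - (q' - |S|) k colours, and the
   parameters (s, k) = (t, 1), (0, d), (0, q - r) give parts (1), (2), (3). *)

Lemma geq_bigmin_idx (I : finType) (P : pred I) (F : I -> nat) (N : nat) :
  \big[minn/N]_(i | P i) F i <= N.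
Proof. by elim/big_rec: _ => // i m _; rewrite geq_min => ->; rewrite orbT. Qed.

Lemma geq_bigmin_cond (I : finType) (P : pred I) (F : I -> nat) (N : nat) (i0 : I) :
  P i0 -> \big[minn/N]_(i | P i) F i <= F i0.
Proof.
move=> Pi0; rewrite -big_filter.
have : i0 \in [seq i <- index_enum I | P i] by rewrite mem_filter Pi0 mem_index_enum.
elim: [seq i <- index_enum I | P i] => // a s IHs; rewrite inE big_cons.
by case/orP=> [/eqP<-|/IHs le_s]; rewrite geq_min ?leqnn ?le_s ?orbT.
Qed.

Lemma leq_bigmin_bigmin (I J : finType) (P : pred I) (Q : pred J)
    (F : I -> nat) (G : J -> nat) (N : nat) :
  (forall j, Q j -> exists2 i, P i & F i <= G j) ->
  \big[minn/N]_(i | P i) F i <= \big[minn/N]_(j | Q j) G j.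
Proof.
move=> FG; apply: (big_ind (fun m => _ <= m)) => [|m n|j Qj].
- exact: geq_bigmin_idx.
- by rewrite leq_min => -> ->.
- by have [i Pi le_FG] := FG j Qj; apply: leq_trans le_FG; apply: geq_bigmin_cond.
Qed.

Section Recolor.

Variables (N q q' r r' : nat) (phi : 'I_q -> 'I_q').
Hypothesis card_preim_phi : forall S : {set 'I_q'}, #|S| <= r' -> #|phi @^-1: S| <= r.

Definition recolor (c : coloring N q) : coloring N q' := [ffun e => phi (c e)].

Lemma path_colors_recolor c s : path_colors (recolor c) s = phi @: path_colors c s.
Proof. by rewrite /path_colors -imset_comp; apply: eq_imset => e; rewrite ffunE. Qed.

Lemma card_path_colors_recolor c s :
  #|path_colors (recolor c) s| <= r' -> #|path_colors c s| <= r.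
Proof.
rewrite path_colors_recolor => /card_preim_phi; apply: leq_trans.
by apply/subset_leq_card/subsetP => a ca; rewrite inE imset_f.
Qed.

Lemma fK_recolor c : fK r' (recolor c) <= fK r c.
Proof.
apply/bigmax_leqP => n /existsP [s /andP [sorted_s col_s]].
apply: leq_bigmax_cond; apply/existsP; exists s.
by rewrite /good_monotone sorted_s card_path_colors_recolor.
Qed.

Lemma gT_recolor T c : gT r' T (recolor c) <= gT r T c.
Proof.
apply/bigmax_leqP => n /existsP [s /and3P [uniq_s arcs_s col_s]].
apply: leq_bigmax_cond; apply/existsP; exists s.
by rewrite /good_directed uniq_s arcs_s card_path_colors_recolor.
Qed.

Lemma f_recolor : f q' r' N <= f q r N.
Proof.
by apply: leq_bigmin_bigmin => c _; exists (recolor c); rewrite ?fK_recolor.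
Qed.

Lemma g_recolor : g q' r' N <= g q r N.
Proof.
apply: leq_bigmin_bigmin => T tour_T; exists T => //.
by apply: leq_bigmin_bigmin => c _; exists (recolor c); rewrite ?gT_recolor.
Qed.

End Recolor.

Lemma card_preimset_fibres (aT rT : finType) (phi : aT -> rT) (A : {set rT}) :
  #|phi @^-1: A| = \sum_(j in A) #|phi @^-1: [set j]|.
Proof.
rewrite -sum1_card (partition_big phi (mem A)) => [|i]; last by rewrite inE.
apply: eq_bigr => j jA; rewrite -sum1_card; apply: eq_bigl => i.
by rewrite !inE andb_idl // => /eqP ->.
Qed.

Lemma card_preimset_large_fibres (aT rT : finType) (phi : aT -> rT) (k : nat)
    (S : {set rT}) :
  (forall j, k <= #|phi @^-1: [set j]|) -> #|phi @^-1: S| + #|~: S| * k <= #|aT|.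
Proof.
move=> large; rewrite -(cardsC (phi @^-1: S)) leq_add2l -preimsetC.
rewrite card_preimset_fibres -sum_nat_const; exact: leq_sum.
Qed.

Section BlockColor.

Variables (q q' s k : nat).
Hypotheses (q'_gt0 : 0 < q') (k_gt0 : 0 < k) (blocks_fit : s + q' * k <= q).

Lemma block_color_subproof (i : 'I_q) : minn ((i - s) %/ k) q'.-1 < q'.
Proof. by rewrite (leq_ltn_trans (geq_minr _ _)) ?ltn_predL. Qed.

Definition block_color (i : 'I_q) : 'I_q' := Ordinal (block_color_subproof i).

Lemma block_color_fibre_large (j : 'I_q') : k <= #|block_color @^-1: [set j]|.
Proof.
have lt_q (x : 'I_k) : s + j * k + x < q.
  have : j.+1 * k <= q' * k by rewrite leq_mul2r ltn_ord orbT.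
  by rewrite mulSn; have := ltn_ord x; lia.
pose g (x : 'I_k) : 'I_q := Ordinal (lt_q x).
have g_inj : injective g by move=> x y /(congr1 val) /addnI; apply: val_inj.
rewrite -[k in k <= _]card_ord -cardsT -(card_imset _ g_inj).
apply/subset_leq_card/subsetP => _ /imsetP [x _ ->]; rewrite !inE.
apply/eqP/val_inj => /=; rewrite -addnA addKn divnMDl // divn_small //.
by rewrite addn0; apply/minn_idPl; rewrite -ltnS prednK.
Qed.

Lemma card_preimset_block_color (S : {set 'I_q'}) :
  #|block_color @^-1: S| + (q' - #|S|) * k <= q.
Proof.
have := card_preimset_large_fibres S block_color_fibre_large.
by rewrite [#|~: S|]cardsCs setCK !card_ord.
Qed.

End BlockColor.

Lemma f_g_block_color (q q' r r' s k N : nat) :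
  0 < q' -> 0 < k -> s + q' * k <= q -> q - (q' - r') * k <= r ->
  f q' r' N <= f q r N /\ g q' r' N <= g q r N.
Proof.
move=> q'_gt0 k_gt0 fit le_r.
have card_preim (S : {set 'I_q'}) :
    #|S| <= r' -> #|block_color (q := q) s k q'_gt0 @^-1: S| <= r.
  move=> le_S; have := card_preimset_block_color q'_gt0 k_gt0 fit S.
  have : (q' - r') * k <= (q' - #|S|) * k by rewrite leq_mul2r leq_sub2l ?orbT.
  lia.
by split; [apply: f_recolor card_preim | apply: g_recolor card_preim].
Qed.

Theorem lemma3p8 (q r N : nat) :
  r < q -> 1 <= r -> 1 <= N ->
  [/\ (forall t, t < r -> f (q - t) (r - t) N <= f q r N /\
                           g (q - t) (r - t) N <= g q r N),
      (forall d, 0 < d -> d %| gcdn q r ->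
         f (q %/ d) (r %/ d) N <= f q r N /\ g (q %/ d) (r %/ d) N <= g q r N)
    & (2 <= q %/ (q - r) ->
         f (q %/ (q - r)) (q %/ (q - r)).-1 N <= f q r N /\
         g (q %/ (q - r)) (q %/ (q - r)).-1 N <= g q r N)].
Proof.
move=> lt_rq r_gt0 _; split.
- move=> t lt_tr; apply: (f_g_block_color (s := t) (k := 1)); lia.
- move=> d d_gt0; rewrite dvdn_gcd => /andP [dvd_dq dvd_dr].
  have q_gt0 : 0 < q by lia.
  apply: (f_g_block_color (s := 0) (k := d)) => //.
  + by rewrite divn_gt0 // dvdn_leq.
  + by rewrite divnK.
  + by rewrite mulnBl !divnK // subKn // ltnW.
- set p := q %/ (q - r) => p_ge2.
  have le_pq : p * (q - r) <= q by apply: leq_divM.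
  apply: (f_g_block_color (s := 0) (k := q - r)); lia.
Qed.
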